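(* Let $\theta:[0,1]\to[0,\infty]$ and $\vartheta:[0,\infty]\to[0,1]$ be continuous and decreasing functions, and suppose that the function $O_{\theta,\vartheta}:[0,1]^2\to[0,1]$, $O_{\theta,\vartheta}(x,y)=\vartheta(\theta(x)+\theta(y))$, is an overlap function. Then: (i) $\theta(x)=\infty$ if and only if $x=0$; (ii) $\vartheta(x)=0$ if and only if $x=\infty$.
   Context: ''Decreasing'' means non-increasing and ''increasing'' means non-decreasing. Arithmetic in $[0,\infty]$ uses $c+\infty=\infty+c=\infty$; continuity on $[0,\infty]$ refers to the usual topology of the extended half-line. An overlap function is a map $O:[0,1]^2\to[0,1]$ that is (O1) commutative, (O2) $O(x,y)=0$ iff $xy=0$, (O3) $O(x,y)=1$ iff $xy=1$, (O4) increasing in each variable, (O5) continuous. If $O_{\theta,\vartheta}$ is an overlap function, $(\theta,\vartheta)$ is called an additive generator pair of it. *)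

From mathcomp Require Import all_boot all_order all_algebra.
From mathcomp Require Import all_classical all_reals all_analysis.
Set Implicit Arguments. Unset Strict Implicit. Unset Printing Implicit Defensive.
Import Order.TTheory GRing.Theory Num.Theory.
Import numFieldNormedType.Exports.
Local Open Scope classical_set_scope.
Local Open Scope ring_scope.

Definition unitI (R : realType) : set R := `[0, 1]%classic.

Definition ehalf (R : realType) : set (\bar R) := [set x | (0 <= x)%E].
Arguments unitI R : clear implicits.
Arguments ehalf R : clear implicits.

(* Overlap function O : [0,1]^2 -> [0,1] (values of O outside [0,1]^2 are
   irrelevant). *)
Definition overlap (R : realType) (O : R -> R -> R) : Prop :=
  (forall x y, x \in unitI R -> y \in unitI R -> O x y \in unitI R) /\
  (forall x y, x \in unitI R -> y \in unitI R -> O x y = O y x) /\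
  (forall x y, x \in unitI R -> y \in unitI R ->
                (O x y = 0 <-> x * y = 0)) /\
  (forall x y, x \in unitI R -> y \in unitI R ->
                (O x y = 1 <-> x * y = 1)) /\
  (forall x y z, x \in unitI R -> y \in unitI R -> z \in unitI R ->
                y <= z -> O x y <= O x z /\ O y x <= O z x) /\
  {within (unitI R `*` unitI R : set (R * R)%type),
               continuous (fun p : (R * R)%type => O p.1 p.2)}.

Definition O_gen (R : realType) (theta : R -> \bar R) (vtheta : \bar R -> R)
  : R -> R -> R := fun x y => vtheta (theta x + theta y)%E.

From mathcomp Require Import all_boot all_order all_algebra.
From mathcomp Require Import all_classical all_reals all_analysis.
From mathcomp Require Import lra.

Set Implicit Arguments.
Unset Strict Implicit.
Unset Printing Implicit Defensive.
Import Order.TTheory GRing.Theory Num.Theory.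
Import numFieldNormedType.Exports.
Local Open Scope classical_set_scope.
Local Open Scope ring_scope.

(* By (O2), O(x,y) = vtheta(theta x + theta y) vanishes exactly when x = 0 or
   y = 0; since vtheta is decreasing and nonnegative, its zero set is an
   up-set.  If theta 0 = a were finite, then O(0,1) = 0 puts a + theta 1 in
   that up-set, and some x > 0 has 2 theta x >= a + theta 1 (by continuity of
   theta at 0 if theta 1 < a, and x = 1 otherwise), i.e. O(x,x) = 0: absurd.
   So theta 0 = +oo, and both equivalences follow: theta x = +oo forces
   O(x,x) = O(0,0) = 0, while a finite zero r of vtheta would be exceeded by
   theta x for x > 0 close to 0, forcing O(x,1) = 0. *)

Lemma in_unitI (R : realType) (x : R) : (x \in unitI R) = (0 <= x <= 1).
Proof. by apply/idP/idP; rewrite in_setE /unitI /= in_itv. Qed.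

Lemma in_ehalf (R : realType) (u : \bar R) : (u \in ehalf R) = (0 <= u)%E.
Proof. by apply/idP/idP; rewrite in_setE. Qed.

Lemma within_unitI_continuous_gt0 (R : realType) (f : R -> \bar R) (c : \bar R) :
  {within unitI R, continuous f} -> (c < f 0%R)%E ->
  exists2 x : R, 0 < x <= 1 & (c < f x)%E.
Proof.
move=> f_cont c_lt_f0.
have I0 : unitI R 0 by rewrite /unitI /= in_itv /= lexx ler01.
have := f_cont 0 _ (open_ereal_gt' c_lt_f0).
rewrite /nbhs /= -(nbhs_subspace_in I0) /= => -[e /= e_gt0 near0].
have he_gt0 : 0 < Num.min (e / 2) 1 by rewrite lt_min ltr01 divr_gt0.
exists (Num.min (e / 2) 1); first by rewrite he_gt0 ge_min lexx orbT.
apply: near0; last by rewrite /unitI /= in_itv /= ltW //= ge_min lexx orbT.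
rewrite /ball /= sub0r normrN gtr0_norm // gt_min.
by rewrite ltr_pdivrMr // ltr_pMr // ltr1n.
Qed.

Section AdditiveGeneratorPair.
Variables (R : realType) (theta : R -> \bar R) (vtheta : \bar R -> R).

Hypothesis theta_ge0 : forall x, x \in unitI R -> theta x \in ehalf R.
Hypothesis vtheta_unitI : forall u, u \in ehalf R -> vtheta u \in unitI R.
Hypothesis theta_cont : {within unitI R, continuous theta}.
Hypothesis theta_dec : forall x y, x \in unitI R -> y \in unitI R ->
  x <= y -> (theta y <= theta x)%E.
Hypothesis vtheta_dec : forall u v, u \in ehalf R -> v \in ehalf R ->
  (u <= v)%E -> vtheta v <= vtheta u.
Hypothesis overlap_eq0 : forall x y, x \in unitI R -> y \in unitI R ->
  (O_gen theta vtheta x y = 0 <-> x * y = 0).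

Let I0 : (0 : R) \in unitI R. Proof. by rewrite in_unitI lexx ler01. Qed.
Let I1 : (1 : R) \in unitI R. Proof. by rewrite in_unitI lexx ler01. Qed.

Let thetaE_ge0 {x} : x \in unitI R -> (0 <= theta x)%E.
Proof. by move=> /theta_ge0; rewrite in_ehalf. Qed.

Lemma vtheta_eq0_le u v : (0 <= u)%E -> (u <= v)%E ->
  vtheta u = 0 -> vtheta v = 0.
Proof.
move=> u_ge0 u_le_v vu0; have v_ge0 := le_trans u_ge0 u_le_v.
have /andP[vtv_ge0 _] : 0 <= vtheta v <= 1.
  by rewrite -in_unitI vtheta_unitI ?in_ehalf.
by apply/eqP; rewrite eq_le vtv_ge0 -vu0 vtheta_dec ?in_ehalf.
Qed.

Lemma O_gen_0l y : y \in unitI R -> O_gen theta vtheta 0 y = 0.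
Proof. by move=> Iy; apply/(overlap_eq0 I0 Iy); rewrite mul0r. Qed.

Lemma O_gen_gt0_neq0 x y : 0 < x <= 1 -> 0 < y <= 1 ->
  O_gen theta vtheta x y <> 0.
Proof.
move=> /andP[x_gt0 x_le1] /andP[y_gt0 y_le1].
have Ix : x \in unitI R by rewrite in_unitI ltW.
have Iy : y \in unitI R by rewrite in_unitI ltW.
by move=> /(overlap_eq0 Ix Iy) /eqP; rewrite mulf_eq0 !gt_eqF.
Qed.

Lemma theta0_infty : theta 0 = +oo%E.
Proof.
have := theta_dec I0 I1 ler01; have := thetaE_ge0 I1.
case E0: (theta 0) => [a| |] //; case E1: (theta 1) => [b| |] //.
rewrite !lee_fin => b_ge0 b_le_a; exfalso.
have [x x01 hx] : exists2 x : R, 0 < x <= 1 & (((a + b) / 2)%:E <= theta x)%E.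
  have [b_lt_a|a_le_b] := ltP b a.
    have [|x x01 hx] :=
      @within_unitI_continuous_gt0 _ _ ((a + b) / 2)%:E theta_cont.
      by rewrite E0 lte_fin; lra.
    by exists x; rewrite // ltW.
  by exists 1; rewrite ?ltr01 ?lexx // E1 lee_fin; lra.
apply: (O_gen_gt0_neq0 x01 x01); apply: vtheta_eq0_le (O_gen_0l I1).
  by rewrite adde_ge0 ?thetaE_ge0.
rewrite E0 E1; apply: le_trans (leeD hx hx).
by rewrite -EFinD lee_fin; lra.
Qed.

Lemma theta_eq_infty x : x \in unitI R -> (theta x = +oo%E <-> x = 0).
Proof.
move=> Ix; split=> [thx_infty|->]; last exact: theta0_infty.
have [//|x_neq0] := eqVneq x 0; exfalso.
have x01 : 0 < x <= 1 by rewrite lt_def x_neq0 -in_unitI.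
by apply: (O_gen_gt0_neq0 x01 x01); rewrite /O_gen thx_infty -theta0_infty; exact: O_gen_0l.
Qed.

Lemma vtheta_eq0 u : u \in ehalf R -> (vtheta u = 0 <-> u = +oo%E).
Proof.
rewrite in_ehalf => u_ge0; split=> [vu0|->]; last first.
  by rewrite -(O_gen_0l I0) /O_gen theta0_infty.
move: u_ge0 vu0; case: u => [r| |] // r_ge0 vr0; exfalso.
have [|x x01 hx] := @within_unitI_continuous_gt0 _ _ r%:E theta_cont.
  by rewrite theta0_infty ltry.
apply: (@O_gen_gt0_neq0 x 1 x01); first by rewrite ltr01 lexx.
apply: (vtheta_eq0_le r_ge0 _ vr0).
exact: le_trans (ltW hx) (leeDl _ (thetaE_ge0 I1)).
Qed.

End AdditiveGeneratorPair.

Theorem theorem3p1 (R : realType) (theta : R -> \bar R) (vtheta : \bar R -> R) :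
  (* theta : [0,1] -> [0,oo] *)
  (forall x, x \in unitI R -> theta x \in ehalf R) ->
  (* vartheta : [0,oo] -> [0,1] *)
  (forall u, u \in ehalf R -> vtheta u \in unitI R) ->
  {within unitI R, continuous theta} ->
  {within ehalf R, continuous vtheta} ->
  (* decreasing = non-increasing *)
  (forall x y, x \in unitI R -> y \in unitI R -> x <= y -> (theta y <= theta x)%E) ->
  (forall u v, u \in ehalf R -> v \in ehalf R -> (u <= v)%E -> vtheta v <= vtheta u) ->
  overlap (O_gen theta vtheta) ->
  (forall x, x \in unitI R -> (theta x = +oo%E <-> x = 0)) /\
  (forall u, u \in ehalf R -> (vtheta u = 0 <-> u = +oo%E)).
Proof.
move=> theta_ge0 vtheta_unitI theta_cont _ theta_dec vtheta_dec.
move=> [_ [_ [overlap_eq0 _]]]; split=> [x|u].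
- exact: (theta_eq_infty theta_ge0 vtheta_unitI theta_cont theta_dec
            vtheta_dec overlap_eq0).
- exact: (vtheta_eq0 theta_ge0 vtheta_unitI theta_cont theta_dec
            vtheta_dec overlap_eq0).
Qed.
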